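(* Let $G\in\mathfrak D_4$ and let $\Upsilon\subseteq G$ be a subgraph isomorphic to the Mycielski–Grötzsch graph with vertices labelled $a_j,b_j$ ($j\in\mathbb Z/5\mathbb Z$), $c$. If $q\in V(G)$ is adjacent to $a_1$ and $a_4$, then either $q$ is a $\Upsilon$-twin of $c$, or $q\in\mathrm{Ext}(\Upsilon,a_0)$, i.e. $q$ is adjacent to each of $a_4,a_1,b_0$.
   Context: $\mathfrak D_4$ is the class of (finite) maximal triangle-free graphs satisfying property $\mathscr{D}_4$ (for every $m\in\{1,2,3,4\}$ and every sequence $x_1,\dots,x_{3m}$ of not necessarily distinct vertices there is a vertex $y$ with $|\{i: x_iy\in E(G)\}|\ge m+1$). Mycielski–Grötzsch graph: vertices $a_j,b_j$ ($j\in\mathbb Z/5\mathbb Z$), $c$; edges all pairs $a_jc$, $a_jb_{j\pm2}$, $b_jb_{j+2}$. For a subgraph $H$ of $G$, $q\in V(H)$, $q'\in V(G)$: $q'$ is an $H$-twin of $q$ if $\mathrm N(q)\cap V(H)=\mathrm N(q')\cap V(H)$ (neighbourhoods in $G$). For $i\in\mathbb Z/5\mathbb Z$, $\mathrm{Ext}(\Upsilon,a_i)$ is the set of common neighbours in $G$ of $a_{i-1},a_{i+1},b_i$. *)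

From mathcomp Require Import all_boot all_order all_algebra.
Set Implicit Arguments. Unset Strict Implicit. Unset Printing Implicit Defensive.
Import GRing.Theory.

Definition simple_graph (T : finType) (e : rel T) : Prop :=
  symmetric e /\ irreflexive e.

Definition triangle_free (T : finType) (e : rel T) : Prop :=
  forall x y z : T, e x y -> e y z -> ~~ e x z.

Definition maximal_triangle_free (T : finType) (e : rel T) : Prop :=
  simple_graph e /\ triangle_free e /\
  forall x y : T, x != y -> ~~ e x y -> exists z, e x z && e z y.

Definition prop_D4 (T : finType) (e : rel T) : Prop :=
  forall m : nat, 1 <= m <= 4 ->
  forall x : 'I_(3 * m) -> T,
  exists y : T, m.+1 <= #|[set i : 'I_(3 * m) | e (x i) y]|.

Definition in_class_D4 (T : finType) (e : rel T) : Prop :=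
  maximal_triangle_free e /\ prop_D4 e.

Definition MG_subgraph (T : finType) (e : rel T) (a b : 'Z_5 -> T) (c : T) : Prop :=
  injective a /\ injective b /\
  (forall i j, a i != b j) /\ (forall i, a i != c) /\ (forall i, b i != c) /\
  (forall j, e (a j) c) /\
  (forall j, e (a j) (b (j + 2)%R) /\ e (a j) (b (j - 2)%R)) /\
  (forall j, e (b j) (b (j + 2)%R)).

Definition in_MG (T : finType) (a b : 'Z_5 -> T) (c : T) (v : T) : bool :=
  (v == c) || [exists i : 'Z_5, (v == a i) || (v == b i)].

Definition twin_in (T : finType) (e : rel T) (a b : 'Z_5 -> T) (c : T) (q q' : T) : Prop :=
  forall v, in_MG a b c v -> e q v = e q' v.

Definition Ext (T : finType) (e : rel T) (a b : 'Z_5 -> T) (i : 'Z_5) (q : T) : bool :=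
  [&& e q (a (i - 1)%R), e q (a (i + 1)%R) & e q (b i)].

From mathcomp Require Import all_boot all_order all_algebra.
Import GRing.Theory.

(* In a triangle-free graph the neighbours of a vertex y among a list of
   3m vertices form an independent set of the graph these vertices span, so
   property D_4 yields a y whose neighbourhood there is an independent set
   with more than m elements; enumerating those sets shows which vertices y
   must see.  Repeating this (and using maximality once, for a common
   neighbour of q and a_0) shows that a vertex seeing a_1 and a_4 but not b_0
   sees a_0, and sees a_2 iff it sees a_3.  If it sees neither, D_4 produces
   a vertex completing a second copy of the Groetzsch graph in which the
   first fact fails.  A vertex seeing every a_j sees no b_j and not c, hence
   is a twin of c. *)

Fixpoint bitseqs (n : nat) : seq bitseq :=
  if n is n'.+1 then [seq x :: s | x <- [:: false; true], s <- bitseqs n']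
  else [:: [::]].

Lemma mem_bitseqs n s : size s = n -> s \in bitseqs n.
Proof.
elim: n s => [|n IHn] [|x s] // [size_s].
by case: x; rewrite /= !mem_cat ?map_f ?IHn ?orbT.
Qed.

Definition indep_bits (E : seq (nat * nat)) (s : bitseq) : bool :=
  all (fun ij => ~~ (nth false s ij.1 && nth false s ij.2)) E.

(* Checkable certificate: in the graph on 0..n-1 with edge list E, every
   independent set with more than m elements contains a member of F. *)
Definition large_indep_cover n m E (F : seq (seq nat)) : bool :=
  all (fun s => indep_bits E s ==> (m < count id s) ==> has (fun S => all (nth false s) S) F)
    (bitseqs n).

Lemma card_ord_count n (f : nat -> bool) :
  #|[set i : 'I_n | f i]| = count f (iota 0 n).
Proof.
rewrite cardsE cardE -val_enum_ord count_map /enum_mem size_filter /=.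
by rewrite (@eq_filter _ _ predT) ?filter_predT.
Qed.

Lemma forall_Z5 (P : 'Z_5 -> Prop) :
  P 0%R -> P 1%R -> P 2%:R%R -> P 3%:R%R -> P 4%:R%R -> forall i, P i.
Proof.
move=> P0 P1 P2 P3 P4; case=> -[|[|[|[|[|//]]]]] lt_i5;
  [apply: (eq_ind _ P P0) | apply: (eq_ind _ P P1) | apply: (eq_ind _ P P2)
  | apply: (eq_ind _ P P3) | apply: (eq_ind _ P P4)]; exact/val_inj.
Qed.

Section D4Graph.

Variables (T : finType) (e : rel T).
Hypotheses (e_sym : symmetric e) (e_irr : irreflexive e) (e_tf : triangle_free e).
Hypothesis e_max : forall x y : T, x != y -> ~~ e x y -> exists z, e x z && e z y.
Hypothesis e_D4 : prop_D4 e.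

Lemma nonadj {x y z : T} : e x y -> e y z -> e x z = false.
Proof. by move=> xy yz; exact: negbTE (e_tf _ _ _ xy yz). Qed.

Lemma D4_common_neighbour (x0 : T) m (vs : seq T) E F :
  1 <= m <= 4 -> size vs = 3 * m ->
  all (fun ij => e (nth x0 vs ij.1) (nth x0 vs ij.2)) E ->
  large_indep_cover (3 * m) m E F ->
  exists y, has (fun S => all (fun i => e (nth x0 vs i) y) S) F.
Proof.
move=> m_range size_vs vs_E cover.
have [y Ny] := e_D4 _ m_range (fun i => nth x0 vs i).
exists y; set s := [seq e v y | v <- vs].
have size_s : size s = 3 * m by rewrite size_map.
have nth_s i : nth false s i = (i < 3 * m) && e (nth x0 vs i) y.
  case: ltnP => lt_i; first by rewrite (nth_map x0) // size_vs.
  by rewrite nth_default // size_s.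
have count_s : #|[set i : 'I_(3 * m) | e (nth x0 vs i) y]| = count id s.
  rewrite (card_ord_count _ (fun i => e (nth x0 vs i) y)).
  rewrite -[in RHS](mkseq_nth false s) /mkseq count_map size_s.
  by apply: eq_in_count => i; rewrite mem_iota /= nth_s => ->.
have indep_s : indep_bits E s.
  apply/allP => -[i j] /(allP vs_E) /= ij; rewrite !nth_s.
  by apply/negP => /andP[/andP[_ iy] /andP[_ jy]]; rewrite (nonadj ij jy) in iy.
have := allP cover s (mem_bitseqs _ _ size_s); rewrite indep_s -count_s Ny /=.
by apply: sub_has => S /allP S_s; apply/allP => i /S_s; rewrite nth_s => /andP[].
Qed.

Definition groetzsch (c a0 a1 a2 a3 a4 b0 b1 b2 b3 b4 : T) : bool :=
  all (fun uv => e uv.1 uv.2)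
    [:: (a0, c); (a1, c); (a2, c); (a3, c); (a4, c);
        (a0, b2); (a0, b3); (a1, b3); (a1, b4); (a2, b4);
        (a2, b0); (a3, b0); (a3, b1); (a4, b1); (a4, b2);
        (b0, b2); (b1, b3); (b2, b4); (b3, b0); (b4, b1)].

Ltac edge := first [done | assumption | rewrite e_sym; assumption].
Ltac edges := rewrite ?/groetzsch /=; repeat (apply/andP; split); edge.
Ltac unpack G :=
  let G0 := fresh in
  have G0 := G; rewrite /groetzsch /= in G0; repeat case/andP: G0 => ? G0.

Section Copy.

Context {c a0 a1 a2 a3 a4 b0 b1 b2 b3 b4 : T}.

Lemma groetzsch_rot :
  groetzsch c a0 a1 a2 a3 a4 b0 b1 b2 b3 b4 ->
  groetzsch c a1 a2 a3 a4 a0 b1 b2 b3 b4 b0.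
Proof. by move=> G; unpack G; edges. Qed.

Lemma groetzsch_refl :
  groetzsch c a0 a1 a2 a3 a4 b0 b1 b2 b3 b4 ->
  groetzsch c a0 a4 a3 a2 a1 b0 b4 b3 b2 b1.
Proof. by move=> G; unpack G; edges. Qed.

End Copy.

Lemma groetzsch_flank {c a0 a1 a2 a3 a4 b0 b1 b2 b3 b4 p : T} :
  groetzsch c a0 a1 a2 a3 a4 b0 b1 b2 b3 b4 ->
  e p a1 -> e p a4 -> e p a0 || e p b0.
Proof.
move=> G pa1 pa4; apply/norP => -[pa0 pb0]; unpack G.
have p_a0 : p != a0.
  by apply: contraTneq pa1 => ->; apply/negbT/(nonadj (y := c)); edge.
have [z /andP[pz za0]] := e_max _ _ p_a0 pa0.
have [y] := D4_common_neighbour c 4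
  [:: c; a0; a1; a2; a4; b0; b1; b2; b3; b4; p; z]
  [:: (0,1); (0,2); (0,3); (0,4); (1,7); (1,8); (1,11); (2,8); (2,9); (2,10);
      (3,5); (3,9); (4,6); (4,7); (4,10); (5,7); (5,8); (6,8); (6,9); (7,9);
      (10,11)]
  [:: [:: 2; 3; 6; 7; 11]] isT erefl ltac:(edges) ltac:(by vm_compute).
rewrite /= orbF !andbT => /and5P[a1y a2y b1y b2y zy].
by have [] := D4_common_neighbour c 4
  [:: c; a0; a1; a3; a4; b0; b1; b2; b3; p; z; y]
  [:: (0,1); (0,2); (0,3); (0,4); (1,7); (1,8); (1,10); (2,8); (2,9); (2,11);
      (3,5); (3,6); (4,6); (4,7); (4,9); (5,7); (5,8); (6,8); (6,11); (7,11);
      (9,10); (10,11)]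
  [::] isT erefl ltac:(edges) ltac:(by vm_compute).
Qed.

Lemma groetzsch_no_cover {c a0 a1 a2 a3 a4 b0 b1 b2 b3 b4 q w : T} :
  groetzsch c a0 a1 a2 a3 a4 b0 b1 b2 b3 b4 ->
  e q a1 -> e q a4 -> ~~ e q b0 ->
  e w a2 -> e w a3 -> e w b2 -> e w b3 -> e w q -> False.
Proof.
move=> G qa1 qa4 qb0 wa2 wa3 wb2 wb3 wq; unpack G.
have G' : groetzsch w q b2 a2 a3 b3 c b1 a1 a4 b4 by edges.
have := groetzsch_flank (p := b0) G' ltac:(edge) ltac:(edge).
by rewrite e_sym (negbTE qb0) (nonadj (y := a2) (z := c)) //; edge.
Qed.

Section Gap.

Context {c a0 a1 a2 a3 a4 b0 b1 b2 b3 b4 q y : T}.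
Hypothesis G : groetzsch c a0 a1 a2 a3 a4 b0 b1 b2 b3 b4.
Hypotheses (qa1 : e q a1) (qa4 : e q a4).

Lemma gap_no_cover_b0_b4 :
  e q a0 -> ~~ e q a3 -> e y b0 -> e y b4 -> e y q -> False.
Proof.
move=> qa0 qa3 yb0 yb4 yq; unpack G.
have [w] := D4_common_neighbour c 4
  [:: c; a0; a1; a3; a4; b0; b1; b2; b3; b4; q; y]
  [:: (0,1); (0,2); (0,3); (0,4); (1,7); (1,8); (1,10); (2,8); (2,9); (2,10);
      (3,5); (3,6); (4,6); (4,7); (4,10); (5,7); (5,8); (5,11); (6,8); (6,9);
      (7,9); (9,11); (10,11)]
  [:: [:: 1; 2; 3; 4; 11]] isT erefl ltac:(edges) ltac:(by vm_compute).
rewrite /= orbF !andbT => /and5P[a0w a1w a3w a4w yw].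
have G' : groetzsch w a3 a4 a0 a1 y b3 b4 b0 b1 b2 by edges.
have := groetzsch_flank (p := q) G' qa4 ltac:(edge).
by rewrite (negbTE qa3) (nonadj (y := a1) (z := b3)) //; edge.
Qed.

Lemma gap_no_cover_a3_b4 :
  e q a0 -> ~~ e q b0 -> e y a3 -> e y b4 -> e y q -> False.
Proof.
move=> qa0 qb0 ya3 yb4 yq; unpack G.
have [w] := D4_common_neighbour c 4
  [:: c; a0; a2; a3; a4; b0; b1; b2; b3; b4; q; y]
  [:: (0,1); (0,2); (0,3); (0,4); (1,7); (1,8); (1,10); (2,5); (2,9); (3,5);
      (3,6); (3,11); (4,6); (4,7); (4,10); (5,7); (5,8); (6,8); (6,9); (7,9);
      (9,11); (10,11)]
  [:: [:: 2; 3; 7; 8; 10]] isT erefl ltac:(edges) ltac:(by vm_compute).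
rewrite /= orbF !andbT => /and5P[a2w a3w b2w b3w qw].
by apply: (groetzsch_no_cover (w := w) G qa1 qa4 qb0); edge.
Qed.

Lemma gap_no_cover_a2_a3 : ~~ e q b0 -> e y a2 -> e y a3 -> e y q -> False.
Proof.
move=> qb0 ya2 ya3 yq; unpack G.
have [w] := D4_common_neighbour c 4
  [:: c; a1; a2; a3; a4; b0; b1; b2; b3; b4; q; y]
  [:: (0,1); (0,2); (0,3); (0,4); (1,8); (1,9); (1,10); (2,5); (2,9); (2,11);
      (3,5); (3,6); (3,11); (4,6); (4,7); (4,10); (5,7); (5,8); (6,8); (6,9);
      (7,9); (10,11)]
  [:: [:: 2; 3; 7; 8; 10]] isT erefl ltac:(edges) ltac:(by vm_compute).
rewrite /= orbF !andbT => /and5P[a2w a3w b2w b3w qw].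
by apply: (groetzsch_no_cover (w := w) G qa1 qa4 qb0); edge.
Qed.

End Gap.

Lemma gap_impossible {c a0 a1 a2 a3 a4 b0 b1 b2 b3 b4 q : T} :
  groetzsch c a0 a1 a2 a3 a4 b0 b1 b2 b3 b4 ->
  e q a0 -> e q a1 -> e q a4 -> ~~ e q a2 -> ~~ e q a3 -> ~~ e q b0 -> False.
Proof.
move=> G qa0 qa1 qa4 qa2 qa3 qb0; unpack G.
(* The configuration of q is invariant under the reflection j |-> -j. *)
have G' := groetzsch_refl G.
have [y] := D4_common_neighbour c 2 [:: a2; a3; b0; b1; b4; q]
  [:: (0,2); (0,4); (1,2); (1,3); (3,4)]
  [:: [:: 2; 4; 5]; [:: 2; 3; 5]; [:: 1; 4; 5]; [:: 0; 3; 5]; [:: 0; 1; 5]]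
  isT erefl ltac:(edges) ltac:(by vm_compute).
rewrite /= orbF !andbT => /or4P[/and3P[b0y b4y qy] | /and3P[b0y b1y qy] |
  /and3P[a3y b4y qy] | /orP[/and3P[a2y b1y qy] | /and3P[a2y a3y qy]]].
- by apply: (gap_no_cover_b0_b4 (y := y) G qa1 qa4 qa0 qa3); edge.
- by apply: (gap_no_cover_b0_b4 (y := y) G' qa4 qa1 qa0 qa2); edge.
- by apply: (gap_no_cover_a3_b4 (y := y) G qa1 qa4 qa0 qb0); edge.
- by apply: (gap_no_cover_a3_b4 (y := y) G' qa4 qa1 qa0 qb0); edge.
- by apply: (gap_no_cover_a2_a3 (y := y) G qa1 qa4 qb0); edge.
Qed.

Lemma groetzsch_apex {c a0 a1 a2 a3 a4 b0 b1 b2 b3 b4 q : T} :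
  groetzsch c a0 a1 a2 a3 a4 b0 b1 b2 b3 b4 ->
  e q a1 -> e q a4 -> ~~ e q b0 -> [/\ e q a0, e q a2 & e q a3].
Proof.
move=> G qa1 qa4 qb0; unpack G.
have qa0 : e q a0 by move: (groetzsch_flank G qa1 qa4); rewrite (negbTE qb0) orbF.
have G2 := groetzsch_rot (groetzsch_rot G); have G3 := groetzsch_rot G2.
have qa3_qa2 : e q a3 -> e q a2.
  move=> qa3; move: (groetzsch_flank G2 qa3 qa1).
  by rewrite (nonadj (y := a4) (z := b2)) ?orbF.
have qa2_qa3 : e q a2 -> e q a3.
  move=> qa2; move: (groetzsch_flank G3 qa4 qa2).
  by rewrite (nonadj (y := a1) (z := b3)) ?orbF.
have [qa2 | nqa2] := boolP (e q a2); first by split; last exact: qa2_qa3.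
by case: (gap_impossible G qa0 qa1 qa4 nqa2 (contra qa3_qa2 nqa2) qb0).
Qed.

Lemma MG_subgraph_groetzsch {a b : 'Z_5 -> T} {c : T} :
  MG_subgraph e a b c ->
  groetzsch c (a 0%R) (a 1%R) (a 2%:R%R) (a 3%:R%R) (a 4%:R%R)
              (b 0%R) (b 1%R) (b 2%:R%R) (b 3%:R%R) (b 4%:R%R).
Proof.
move=> [_ [_ [_ [_ [_ [ac [ab bb]]]]]]].
have ab' (i j : 'Z_5) :
    val j = val (i + 2)%R \/ val j = val (i - 2)%R -> e (a i) (b j).
  by case=> /val_inj ->; case: (ab i).
have bb' (i j : 'Z_5) : val j = val (i + 2)%R -> e (b i) (b j) by move=> /val_inj ->.
rewrite /groetzsch /=; repeat (apply/andP; split) => //;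
  first [exact: ac | exact: bb' | apply: ab'; by [left | right]].
Qed.

Lemma apex_twin {a b : 'Z_5 -> T} {c q : T} :
  MG_subgraph e a b c -> (forall i, e q (a i)) -> twin_in e a b c c q.
Proof.
move=> [_ [_ [_ [_ [_ [ac [ab _]]]]]]] qa v.
case/orP=> [/eqP-> | /existsP[i /orP[] /eqP->]].
- by rewrite e_irr (nonadj (qa 0%R)).
- by rewrite e_sym ac qa.
have [_ aib] := ab (i + 2)%R; rewrite addrK in aib.
by rewrite (nonadj (x := c) _ aib) ?(nonadj (qa _) aib) // e_sym.
Qed.

End D4Graph.

Theorem mainTheorem14 (T : finType) (e : rel T) (a b : 'Z_5 -> T) (c q : T) :
  in_class_D4 e ->
  MG_subgraph e a b c ->
  e q (a 1%R) -> e q (a 4%:R%R) ->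
  twin_in e a b c c q \/ Ext e a b 0%R q.
Proof.
move=> [[[e_sym e_irr] [e_tf e_max]] e_D4] MG qa1 qa4.
have [qb0 | qb0] := boolP (e q (b 0%R)).
  right; rewrite /Ext (_ : 0 - 1 = 4%:R)%R ?add0r ?qa1 ?qa4 ?qb0 //; exact/val_inj.
left; apply: (apex_twin _ _ e_sym e_irr e_tf MG).
have G := MG_subgraph_groetzsch _ _ MG.
have [qa0 qa2 qa3] := groetzsch_apex _ _ e_sym e_tf e_max e_D4 G qa1 qa4 qb0.
exact: forall_Z5.
Qed.
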